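(* Let $\Sigma$ be a finite alphabet. There exist a closed term $\mathtt{lift}_\Sigma \in \Lambda_{\mathtt{det}}$ and constants $A,B$ (depending only on $\Sigma$) such that for every value $k$ and every string $s \in \Sigma^*$, $$\mathtt{lift}_\Sigma\; k\; \ulcorner s\urcorner^{\Sigma^*} \to_{\mathtt{det}}^{n} k\; \ulcorner s\urcorner^{\Sigma_\Box^*}$$ for some $n$ with $|s| \le n \le A|s| + B$.
   Context: The deterministic $\lambda$-calculus $\Lambda_{\mathtt{det}}$ has terms and values given by the grammar: terms $t ::= v \mid t\,v$; values $v ::= \lambda x.t \mid x$. Evaluation contexts are $E ::= [\cdot] \mid E\,v$ (they never enter abstractions). The reduction $\to_{\mathtt{det}}$ is the closure under evaluation contexts of $(\lambda x.t)\,s \mapsto t\{x:=s\}$; $t \to_{\mathtt{det}}^n s$ means $t$ reduces to $s$ in exactly $n$ steps. Application associates to the left. Scott encoding: for a finite alphabet $\Sigma = \{a_1,\dots,a_n\}$ with a fixed total order (the given indexing), $\ulcorner a_i\urcorner^{\Sigma} := \lambda x_1.\cdots.\lambda x_n.x_i$, and strings are encoded by $\ulcorner \varepsilon\urcorner^{\Sigma^*} := \lambda x_1.\cdots.\lambda x_n.\lambda y.y$ and $\ulcorner a_i r\urcorner^{\Sigma^*} := \lambda x_1.\cdots.\lambda x_n.\lambda y.\,x_i\,\ulcorner r\urcorner^{\Sigma^*}$. The extended alphabet $\Sigma_\Box := \Sigma \cup \{\Box\}$, where $\Box \notin \Sigma$ is the blank symbol, is ordered as $a_1,\dots,a_n,\Box$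 (blank last); encodings with respect to $\Sigma_\Box$ use this order. $|s|$ is the length of $s$. *)

From mathcomp Require Import all_boot.
Set Implicit Arguments. Unset Strict Implicit. Unset Printing Implicit Defensive.

Inductive tm : Type :=
| Val : value -> tm
| App : tm -> value -> tm
with value : Type :=
| Var : nat -> value
| Lam : tm -> value.

Fixpoint shift_tm (c : nat) (t : tm) : tm :=
  match t with
  | Val v => Val (shift_val c v)
  | App t v => App (shift_tm c t) (shift_val c v)
  end
with shift_val (c : nat) (v : value) : value :=
  match v with
  | Var x => if c <= x then Var x.+1 else Var x
  | Lam t => Lam (shift_tm c.+1 t)
  end.

(* t{j := s}, removing binder j (free variables above j are decremented) *)
Fixpoint subst_tm (j : nat) (s : value) (t : tm) : tm :=
  match t with
  | Val v => Val (subst_val j s v)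
  | App t v => App (subst_tm j s t) (subst_val j s v)
  end
with subst_val (j : nat) (s : value) (v : value) : value :=
  match v with
  | Var x => if x == j then s else if j < x then Var x.-1 else Var x
  | Lam t => Lam (subst_tm j.+1 (shift_val 0 s) t)
  end.

Fixpoint closed_tm (d : nat) (t : tm) : bool :=
  match t with
  | Val v => closed_val d v
  | App t v => closed_tm d t && closed_val d v
  end
with closed_val (d : nat) (v : value) : bool :=
  match v with
  | Var x => x < d
  | Lam t => closed_tm d.+1 t
  end.

Inductive step_det : tm -> tm -> Prop :=
| step_beta (t : tm) (s : value) : step_det (App (Val (Lam t)) s) (subst_tm 0 s t)
| step_ctx (t t' : tm) (v : value) : step_det t t' -> step_det (App t v) (App t' v).

Inductive steps_det : nat -> tm -> tm -> Prop :=
| steps_refl (t : tm) : steps_det 0 t t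
| steps_cons (n : nat) (t u w : tm) :
    step_det t u -> steps_det n u w -> steps_det n.+1 t w.

Fixpoint lams (k : nat) (t : tm) : tm :=
  match k with 0 => t | k.+1 => Val (Lam (lams k t)) end.

(* Scott encoding of a string over the alphabet {a_0,...,a_(m-1)} (0-based
   letter indices): eps = \x_0...\x_(m-1).\y.y,
   a_i r = \x_0...\x_(m-1).\y. x_i [r].
   Under the m+1 binders, x_i has de Bruijn index m - i. *)
Fixpoint enc_str (m : nat) (s : seq nat) : value :=
  match s with
  | [::] => Lam (lams m (Val (Var 0)))
  | i :: r => Lam (lams m (App (Val (Var (m - i))) (enc_str m r)))
  end.

(* Sigma = 'I_n (letters a_1..a_n in their given order); Sigma_Box = 'I_n.+1,
   blank being the last letter n. *)
Definition enc_Sigma (n : nat) (s : seq 'I_n) : value := enc_str n (map (@nat_of_ord n) s).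
Definition enc_SigmaBox (n : nat) (s : seq 'I_n) : value := enc_str n.+1 (map (@nat_of_ord n) s).

From mathcomp Require Import all_boot zify.
Set Implicit Arguments. Unset Strict Implicit. Unset Printing Implicit Defensive.

(* The lifting term is [lift_loop n] applied to itself, a self-applicative loop
   written in continuation-passing style.  Given a continuation k and a
   Scott-encoded string w, the loop applies w to its n + 1 case handlers: on the
   empty string the handler returns k applied to the encoding of the empty string
   over Sigma_Box; on a_i r it re-enters the loop on r with the continuation
   \x. k (a_i x), where a_i x is encoded over Sigma_Box.  Each letter thus costs
   n + 8 reduction steps and the end of the string n + 6, which gives the
   linear bounds. *)

Scheme tm_mut_ind := Induction for tm Sort Prop
  with value_mut_ind := Induction for value Sort Prop.
Combined Scheme tm_value_ind from tm_mut_ind, value_mut_ind.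

Lemma closed_le :
  (forall t d d', closed_tm d t -> d <= d' -> closed_tm d' t) /\
  (forall v d d', closed_val d v -> d <= d' -> closed_val d' v).
Proof.
apply: tm_value_ind => [v IH|t IHt v IHv|x|t IH] d d' /=.
- exact: IH.
- by move=> /andP[ct cv] dd'; rewrite (IHt d) // (IHv d).
- exact: leq_trans.
- by move=> ct dd'; apply: IH ct _.
Qed.

Lemma subst_closed :
  (forall t d j a, closed_tm d t -> d <= j -> subst_tm j a t = t) /\
  (forall v d j a, closed_val d v -> d <= j -> subst_val j a v = v).
Proof.
apply: tm_value_ind => [v IH|t IHt v IHv|x|t IH] d j a /=.
- by move=> cv dj; rewrite (IH d).
- by move=> /andP[ct cv] dj; rewrite (IHt d) // (IHv d).
- by move=> xd dj; have xj := leq_trans xd dj; rewrite ltn_eqF // ltnNge ltnW.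
- by move=> ct dj; rewrite (IH d.+1).
Qed.

Lemma shift_closed :
  (forall t d c, closed_tm d t -> d <= c -> shift_tm c t = t) /\
  (forall v d c, closed_val d v -> d <= c -> shift_val c v = v).
Proof.
apply: tm_value_ind => [v IH|t IHt v IHv|x|t IH] d c /=.
- by move=> cv dc; rewrite (IH d).
- by move=> /andP[ct cv] dc; rewrite (IHt d) // (IHv d).
- by move=> xd dc; rewrite leqNgt (leq_trans xd dc).
- by move=> ct dc; rewrite (IH d.+1).
Qed.

Lemma subst_shift :
  (forall t j a, subst_tm j a (shift_tm j t) = t) /\
  (forall v j a, subst_val j a (shift_val j v) = v).
Proof.
apply: tm_value_ind => [v IH|t IHt v IHv|x|t IH] j a /=.
- by rewrite IH.
- by rewrite IHt IHv.
- case: leqP => [jx|xj] /=; last by rewrite ltn_eqF // ltnNge ltnW.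
  by rewrite gtn_eqF ltnS jx.
- by rewrite IH.
Qed.

Lemma subst_val_closed j a v : closed_val 0 v -> subst_val j a v = v.
Proof. by move/subst_closed.2; apply. Qed.

Lemma shift_val_closed c v : closed_val 0 v -> shift_val c v = v.
Proof. by move/shift_closed.2; apply. Qed.

Definition apps (t : tm) (vs : seq value) : tm := foldl App t vs.

Lemma subst_apps j a t vs :
  subst_tm j a (apps t vs) = apps (subst_tm j a t) (map (subst_val j a) vs).
Proof. by elim: vs t => [|v vs IH] t //=; rewrite IH. Qed.

Lemma map_subst_closed j a vs :
  all (closed_val 0) vs -> map (subst_val j a) vs = vs.
Proof.
by elim: vs => [|v vs IH] //= /andP[cv cvs]; rewrite subst_val_closed ?IH.
Qed.

Lemma closed_apps d t vs :
  closed_tm d (apps t vs) = closed_tm d t && all (closed_val d) vs.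
Proof. by elim: vs t => [|v vs IH] t /=; rewrite ?andbT // IH /= andbA. Qed.

Lemma closed_lams d m t : closed_tm d (lams m t) = closed_tm (d + m) t.
Proof. by elim: m d => [|m IH] d /=; rewrite ?addn0 // IH addnS. Qed.

Lemma subst_lams j a m t : closed_val 0 a ->
  subst_tm j a (lams m t) = lams m (subst_tm (j + m) a t).
Proof.
move=> ca; elim: m j => [|m IH] j /=; first by rewrite addn0.
by rewrite shift_val_closed // IH addSnnS.
Qed.

Lemma step_apps t t' vs : step_det t t' -> step_det (apps t vs) (apps t' vs).
Proof. by elim: vs t t' => [|v vs IH] t t' tt' //=; apply/IH/step_ctx. Qed.

Lemma steps_apps m t t' vs :
  steps_det m t t' -> steps_det m (apps t vs) (apps t' vs).
Proof.
elim=> [u|k a b c ab _ IH]; first exact: steps_refl.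
exact: steps_cons (step_apps _ ab) IH.
Qed.

Lemma steps_add m p a b c :
  steps_det m a b -> steps_det p b c -> steps_det (m + p) a c.
Proof. by elim=> [u|k x y z xy _ IH] // yc; apply: steps_cons xy (IH yc). Qed.

Lemma steps1 t u : step_det t u -> steps_det 1 t u.
Proof. by move=> tu; apply: steps_cons tu (steps_refl _). Qed.

Lemma step_beta_eq t a u : subst_tm 0 a t = u -> step_det (App (Val (Lam t)) a) u.
Proof. by move=> <-; apply: step_beta. Qed.

(* [substs [:: a_1; ...; a_m] t] instantiates the binders of [lams m t],
   outermost first. *)
Fixpoint substs (args : seq value) (t : tm) : tm :=
  if args is a :: rest then substs rest (subst_tm (size rest) a t) else t.

Lemma step_apps_beta m t a args :
  step_det (apps (lams m.+1 t) (a :: args)) (apps (subst_tm 0 a (lams m t)) args).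
Proof. exact: step_apps (step_beta _ _). Qed.

Lemma step_apps_lams m t a args : closed_val 0 a ->
  step_det (apps (lams m.+1 t) (a :: args)) (apps (lams m (subst_tm m a t)) args).
Proof.
by move=> ca; rewrite -[m in subst_tm m]add0n -subst_lams //; apply: step_apps_beta.
Qed.

Lemma steps_apps_lams args t : all (closed_val 0) args ->
  steps_det (size args) (apps (lams (size args) t) args) (substs args t).
Proof.
elim: args t => [|a rest IH] t /=; first by move=> _; apply: steps_refl.
by move=> /andP[ca crest]; apply: steps_cons (step_apps_lams _ _ _ ca) (IH _ crest).
Qed.

Lemma substs_closed args t : closed_tm 0 t -> substs args t = t.
Proof.
by elim: args t => [|a rest IH] t //= ct; rewrite (subst_closed.1 _ 0) ?IH.
Qed.

Lemma substs_App args t v :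
  closed_val 0 v -> substs args (App t v) = App (substs args t) v.
Proof.
by move=> cv; elim: args t => [|a rest IH] t //=; rewrite subst_val_closed ?IH.
Qed.

Lemma substs_Var x0 args p : all (closed_val 0) args -> p < size args ->
  substs args (Val (Var p)) = Val (nth x0 args ((size args).-1 - p)).
Proof.
elim: args => [|a rest IH] //= /andP[ca crest] p_lt.
case: eqP => [->|/eqP p_neq]; first by rewrite substs_closed // subnn.
have p_lt' : p < size rest by rewrite ltn_neqAle p_neq -ltnS.
rewrite ltnNge ltnW // IH //.
by have -> : size rest - p = ((size rest).-1 - p).+1 by lia.
Qed.

Lemma closed_enc_str m s : closed_val 0 (enc_str m s).
Proof.
elim: s => [|i r IH] /=; rewrite closed_lams //= (closed_le.2 _ 0) ?andbT //.
by rewrite ltnS leq_subr.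
Qed.

Section ScottCase.
Variables (m : nat) (hs : seq value) (e : value) (rest : seq value).
Hypotheses (size_hs : size hs = m) (closed_hs : all (closed_val 0) hs)
  (closed_e : closed_val 0 e).

Let closed_args : all (closed_val 0) (rcons hs e).
Proof. by rewrite all_rcons closed_e. Qed.

Let size_args : size (rcons hs e) = m.+1.
Proof. by rewrite size_rcons size_hs. Qed.

Let substs_args_Var p : p <= m ->
  substs (rcons hs e) (Val (Var p)) = Val (nth e hs (m - p)).
Proof.
move=> p_le; rewrite (substs_Var e closed_args) size_args ?ltnS // succnK.
by rewrite nth_rcons; case: ltnP => // ge_size; rewrite nth_default // if_same.
Qed.

Let steps_lams_args t :
  steps_det m.+1 (apps (lams m.+1 t) (hs ++ e :: rest)) (apps (substs (rcons hs e) t) rest).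
Proof.
rewrite -cat_rcons /apps foldl_cat -/(apps _ rest) -/(apps _ (rcons hs e)) -size_args.
exact/steps_apps/steps_apps_lams.
Qed.

Lemma steps_enc_nil :
  steps_det m.+1 (apps (Val (enc_str m [::])) (hs ++ e :: rest)) (apps (Val e) rest).
Proof.
have := steps_lams_args (Val (Var 0)).
by rewrite substs_args_Var // subn0 nth_default ?size_hs.
Qed.

Lemma steps_enc_cons i r : i < m ->
  steps_det m.+1 (apps (Val (enc_str m (i :: r))) (hs ++ e :: rest))
    (apps (Val (nth e hs i)) (enc_str m r :: rest)).
Proof.
move=> i_lt; have := steps_lams_args (App (Val (Var (m - i))) (enc_str m r)).
by rewrite substs_App ?closed_enc_str // substs_args_Var ?leq_subr // subKn // ltnW.
Qed.

End ScottCase.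

(* In named notation, with x the free variable of [box_cons n i]:
     box_cons n i  = the Sigma_Box encoding of a_i x
     push n i k    = \x. k (box_cons n i)
     lift_case n i = \r g k. g g (push n i k) r
     lift_nil n    = \g k. k (the Sigma_Box encoding of the empty string)
     lift_loop n   = \g k w. w (lift_case n 0) ... (lift_case n (n-1)) (lift_nil n) g k *)
Definition box_cons (n i : nat) : value :=
  Lam (lams n.+1 (App (Val (Var (n.+1 - i))) (Var n.+2))).

Definition push (n i : nat) (k : value) : value :=
  Lam (App (Val (shift_val 0 k)) (box_cons n i)).

Definition lift_case (n i : nat) : value :=
  Lam (lams 2 (apps (Val (Var 1)) [:: Var 1; push n i (Var 0); Var 2])).

Definition lift_nil (n : nat) : value :=
  Lam (lams 1 (App (Val (Var 0)) (enc_str n.+1 [::]))).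

Definition lift_cases (n : nat) : seq value := map (lift_case n) (iota 0 n).

Definition lift_loop (n : nat) : value :=
  Lam (lams 2 (apps (Val (Var 0)) (lift_cases n ++ [:: lift_nil n; Var 2; Var 1]))).

(* [simpl] unfolds a [simpl never] constant anyway when it is the argument of a
   fixpoint such as [subst_val]; the reductions below therefore use [cbn]. *)
Arguments box_cons : simpl never.
Arguments push : simpl never.
Arguments lift_case : simpl never.
Arguments lift_nil : simpl never.
Arguments lift_cases : simpl never.
Arguments lift_loop : simpl never.

Section Lift.
Variable n : nat.

Lemma closed_box_cons i : closed_val 1 (box_cons n i).
Proof. by rewrite /box_cons /= closed_lams /=; apply/andP; split; lia. Qed.

Lemma closed_lift_case i : closed_val 0 (lift_case n i).
Proof.
by rewrite /lift_case /push; cbn; rewrite (closed_le.2 _ 1 _ (closed_box_cons i)).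
Qed.

Lemma closed_lift_nil : closed_val 0 (lift_nil n).
Proof.
by rewrite /lift_nil; cbn -[enc_str leq]; rewrite (closed_le.2 _ 0) ?closed_enc_str.
Qed.

Lemma closed_lift_cases : all (closed_val 0) (lift_cases n).
Proof. by rewrite /lift_cases all_map; apply/allP => i _; apply: closed_lift_case. Qed.

Lemma closed_lift_loop : closed_val 0 (lift_loop n).
Proof.
have closed3 v : closed_val 0 v -> closed_val 3 v by move/closed_le.2; apply.
rewrite /lift_loop; cbn -[leq]; rewrite closed_apps all_cat; cbn -[leq].
by rewrite (sub_all closed3 closed_lift_cases) closed3 // closed_lift_nil.
Qed.

Lemma steps_lift_nil g k : closed_val 0 g ->
  steps_det 2 (apps (Val (lift_nil n)) [:: g; k]) (App (Val k) (enc_str n.+1 [::])).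
Proof.
move=> cg; apply: steps_cons (step_apps_lams 1 _ [:: k] cg) (steps1 (step_beta_eq _)).
by cbn -[enc_str]; rewrite !(subst_val_closed _ _ (closed_enc_str _ _)).
Qed.

Lemma steps_lift_case i r g k : closed_val 0 r -> closed_val 0 g ->
  steps_det 3 (apps (Val (lift_case n i)) [:: r; g; k]) (apps (Val g) [:: g; push n i k; r]).
Proof.
move=> cr cg; apply: steps_cons (step_apps_lams 2 _ [:: g; k] cr) _.
apply: steps_cons (step_apps_lams 1 _ [:: k] cg) (steps1 (step_beta_eq _)).
rewrite /push; cbn; rewrite !(subst_closed.2 _ 1 _ _ (closed_box_cons i)) //.
by rewrite /= !(subst_val_closed _ _ cg) !(subst_val_closed _ _ cr).
Qed.

Lemma steps_lift_loop k w : closed_val 0 w ->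
  steps_det 3 (apps (Val (lift_loop n)) [:: lift_loop n; k; w])
    (apps (Val w) (lift_cases n ++ [:: lift_nil n; lift_loop n; k])).
Proof.
move=> cw; apply: steps_cons (step_apps_lams 2 _ [:: k; w] closed_lift_loop) _.
apply: steps_cons (step_apps_beta 1 _ k [:: w]) _.
cbn -[apps]; apply: steps1; apply: step_beta_eq.
rewrite !subst_apps !map_cat !(map_subst_closed _ _ closed_lift_cases).
cbn -[apps].
rewrite !(subst_val_closed _ _ closed_lift_nil) !(subst_val_closed _ _ closed_lift_loop).
by rewrite /= subst_shift.2.
Qed.

Lemma step_push i k r :
  step_det (App (Val (push n i k)) (enc_str n.+1 r)) (App (Val k) (enc_str n.+1 (i :: r))).
Proof.
rewrite /push; apply: step_beta_eq.
rewrite /= subst_shift.2 /box_cons /= !(shift_val_closed _ (closed_enc_str _ _)).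
rewrite subst_lams ?closed_enc_str //= add2n eqxx.
have -> : (n.+1 - i == n.+2) = false by lia.
by have -> : (n.+2 < n.+1 - i) = false by lia.
Qed.

Lemma size_lift_cases : size (lift_cases n) = n.
Proof. by rewrite /lift_cases size_map size_iota. Qed.

Lemma nth_lift_cases i : i < n -> nth (lift_nil n) (lift_cases n) i = lift_case n i.
Proof. by move=> i_lt; rewrite /lift_cases (nth_map 0) ?size_iota // nth_iota. Qed.

Lemma steps_lift_loop_enc k s : all (fun i => i < n) s ->
  steps_det ((n + 8) * size s + (n + 6))
    (apps (Val (lift_loop n)) [:: lift_loop n; k; enc_str n s]) (App (Val k) (enc_str n.+1 s)).
Proof.
elim: s k => [|i r IH] k => [_|/andP[i_lt r_lt]].
  rewrite muln0 add0n (_ : n + 6 = 3 + (n.+1 + 2)); last by lia.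
  apply: steps_add (steps_lift_loop k (closed_enc_str _ _)) _.
  exact: steps_add (steps_enc_nil _ size_lift_cases closed_lift_cases closed_lift_nil)
    (steps_lift_nil _ closed_lift_loop).
rewrite [size _]/= (_ : _ + _ = 3 + (n.+1 + (3 + ((n + 8) * size r + (n + 6) + 1))));
  last by lia.
apply: steps_add (steps_lift_loop k (closed_enc_str _ _)) _.
apply: steps_add (steps_enc_cons _ size_lift_cases closed_lift_cases closed_lift_nil _ i_lt) _.
rewrite nth_lift_cases //.
apply: steps_add (steps_lift_case i k (closed_enc_str _ _) closed_lift_loop) _.
exact: steps_add (IH _ r_lt) (steps1 (step_push _ _ _)).
Qed.

End Lift.

Theorem mainTheorem3 (n : nat) :
  exists lift : tm, closed_tm 0 lift /\
  exists A B : nat, forall (k : value) (s : seq 'I_n),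
    exists m : nat, size s <= m <= A * size s + B /\
      steps_det m (App (App lift k) (enc_Sigma s)) (App (Val k) (enc_SigmaBox s)).
Proof.
exists (App (Val (lift_loop n)) (lift_loop n)); split.
  by apply/andP; split; apply: closed_lift_loop.
exists (n + 8), (n + 6) => k s; exists ((n + 8) * size s + (n + 6)); split.
  by apply/andP; split; [nia|].
have letters : all (fun i => i < n) (map val s).
  by apply/allP => _ /mapP[i _ ->]; apply: ltn_ord.
by rewrite -(size_map val s); apply: steps_lift_loop_enc.
Qed.
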